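(* Let $K,d\ge 1$ be integers and let $X\in\mathbb{R}^{K\times d}$ have rows $x_1,\dots,x_K\in\mathbb{R}^d$ that are affinely dependent, i.e. there exists a nonzero $\psi\in\mathbb{R}^K$ with $\sum_{i=1}^K\psi_i=0$ and $\sum_{i=1}^K\psi_i x_i=0$. Define $f:\Delta^K\to\Delta^d$ by $f(\alpha)=\operatorname{softmax}(\alpha^{T}X)$, where $\operatorname{softmax}(v)_c=e^{v_c}/\sum_{c'=1}^d e^{v_{c'}}$. Then $f$ is not injective.
   Context: $\Delta^K=\{\alpha\in\mathbb{R}^K:\alpha_i\ge 0,\ \sum_i\alpha_i=1\}$ denotes the probability simplex; $\alpha^T X\in\mathbb{R}^d$ is the convex combination $\sum_i\alpha_i x_i$ of the rows of $X$. *)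

From HB Require Import structures.
From mathcomp Require Import all_boot all_order all_algebra.
From mathcomp Require Import all_classical all_reals.
From mathcomp Require Import sequences exp.
Set Implicit Arguments. Unset Strict Implicit. Unset Printing Implicit Defensive.
Import Order.TTheory GRing.Theory Num.Theory.
Local Open Scope ring_scope.

Definition simplex (R : realType) (n : nat) (a : 'rV[R]_n) : Prop :=
  (forall i, 0 <= a 0 i) /\ \sum_(i < n) a 0 i = 1.

Definition softmax (R : realType) (n : nat) (v : 'rV[R]_n) : 'rV[R]_n :=
  \row_(c < n) (expR (v 0 c) / \sum_(c' < n) expR (v 0 c')).

(* f(alpha) = softmax(alpha^T X) ; alpha^T X = sum_i alpha_i x_i = alpha *m X *)
Definition smap (R : realType) (K d : nat) (X : 'M[R]_(K, d)) (a : 'rV[R]_K)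
  : 'rV[R]_d := softmax (a *m X).

From HB Require Import structures.
From mathcomp Require Import all_boot all_order all_algebra.
From mathcomp Require Import all_classical all_reals.
From mathcomp Require Import sequences exp.
Set Implicit Arguments. Unset Strict Implicit. Unset Printing Implicit Defensive.
Import Order.TTheory GRing.Theory Num.Theory.
Local Open Scope ring_scope.

(* The map factors through [a |-> a *m X], and the dependence [psi] lies in the
   left kernel of [X] and sums to zero.  Moving the uniform distribution, an
   interior point of the simplex, a short way along [psi] stays in the simplex
   and does not change [a *m X], so two distinct points have the same image. *)

Section Simplex.
Variables (R : realType) (n : nat).
Implicit Types a psi : 'rV[R]_n.

Lemma simplex_uniform : (0 < n)%N -> simplex (const_mx n%:R^-1 : 'rV[R]_n).
Proof.
move=> n_gt0; split=> [i|]; first by rewrite mxE invr_ge0 ler0n.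
under eq_bigr do rewrite mxE.
by rewrite sumr_const card_ord -[LHS]mulr_natr mulVf // pnatr_eq0 -lt0n.
Qed.

Lemma simplexD_sum_eq0 a psi :
  simplex a -> \sum_i psi 0 i = 0 -> (forall i, 0 <= (a + psi) 0 i) ->
  simplex (a + psi).
Proof.
move=> [_ sum_a] sum_psi ge0; split=> //.
under eq_bigr do rewrite mxE.
by rewrite big_split /= sum_a sum_psi addr0.
Qed.

Lemma ler_norm_row_sum psi i : `|psi 0 i| <= \sum_j `|psi 0 j|.
Proof. by rewrite (bigD1 i) //= lerDl sumr_ge0. Qed.

Lemma sumr_norm_row_eq0 psi : (\sum_j `|psi 0 j| == 0) = (psi == 0).
Proof.
apply/idP/eqP => [/eqP sum0 | ->].
  by apply/rowP => j; rewrite mxE; apply/normr0_eq0/(psumr_eq0P _ sum0).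
by under eq_bigr do rewrite mxE normr0; rewrite big1.
Qed.

(* The step size [(n * sum_j |psi_j|)^-1] keeps every [|t psi_i|] below the
   uniform weight [1/n]; for [psi = 0] it is the junk value [0^-1 = 0]. *)
Lemma simplex_uniformD psi : (0 < n)%N -> \sum_i psi 0 i = 0 ->
  simplex (const_mx n%:R^-1 + (n%:R * \sum_j `|psi 0 j|)^-1 *: psi).
Proof.
move=> n_gt0 sum_psi; set M := \sum_j _; set t := (_ * M)^-1.
apply: simplexD_sum_eq0; first exact: simplex_uniform.
  by under eq_bigr do rewrite mxE; rewrite -mulr_sumr sum_psi mulr0.
move=> i; rewrite !mxE.
have [M0 | M_neq0] := eqVneq M 0.
  move/eqP: M0; rewrite sumr_norm_row_eq0 => /eqP->.
  by rewrite mxE mulr0 addr0 invr_ge0 ler0n.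
have t_ge0 : 0 <= t by rewrite invr_ge0 mulr_ge0 ?ler0n ?sumr_ge0.
have tM : t * M = n%:R^-1 by rewrite /t invfM -mulrA mulVf ?mulr1.
have psiN_le : - psi 0 i <= M.
  by rewrite (le_trans (ler_norm _)) ?normrN ?ler_norm_row_sum.
by rewrite -tM -mulrDr mulr_ge0 // -[psi 0 i]opprK subr_ge0.
Qed.

End Simplex.

Lemma smapD_mulmx_eq0 (R : realType) (K d : nat) (X : 'M[R]_(K, d))
  (a psi : 'rV[R]_K) : psi *m X = 0 -> smap X (a + psi) = smap X a.
Proof. by move=> psiX; rewrite /smap mulmxDl psiX addr0. Qed.

Theorem mainTheorem2 (R : realType) (K d : nat) (hK : (1 <= K)%N) (hd : (1 <= d)%N)
  (X : 'M[R]_(K, d))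
  (hdep : exists psi : 'rV[R]_K, psi != 0 /\ \sum_(i < K) psi 0 i = 0 /\
            \sum_(i < K) psi 0 i *: row i X = 0) :
  ~ (forall a b : 'rV[R]_K, simplex a -> simplex b -> smap X a = smap X b -> a = b).
Proof.
move=> smap_inj; have [psi [psi_neq0 [sum_psi psiX]]] := hdep.
rewrite -mulmx_sum_row in psiX.
set u : 'rV[R]_K := const_mx K%:R^-1.
set t : R := (K%:R * \sum_j `|psi 0 j|)^-1.
have t_neq0 : t != 0.
  by rewrite invr_eq0 mulf_neq0 ?pnatr_eq0 -?lt0n ?sumr_norm_row_eq0.
have smap_eq : smap X (u + t *: psi) = smap X u.
  by apply: smapD_mulmx_eq0; rewrite -scalemxAl psiX scaler0.
have /eqP := smap_inj _ _ (simplex_uniform R hK) (simplex_uniformD hK sum_psi)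
  (esym smap_eq).
rewrite eq_sym -subr_eq0 addrAC subrr add0r scaler_eq0.
by rewrite (negbTE t_neq0) (negbTE psi_neq0).
Qed.
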